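(* Let $r_1, r_2 \geq 2$ be integers. Suppose that for each $i\in\{1,2\}$ the inequality $$\chi\big(KG^{r_i}(n,k,s)\big) \geq \left\lceil \frac{n - r_i(k-s-1)}{r_i-1} \right\rceil$$ holds for all non-negative integers $n,k,s$ satisfying $n \geq r_i(k-1)+1$ and $k > s \geq 0$. Then $$\chi\big(KG^{r_1 r_2}(n,k,s)\big) \geq \left\lceil \frac{n - r_1 r_2(k-s-1)}{r_1 r_2-1} \right\rceil$$ holds for all non-negative integers $n,k,s$ satisfying $n \geq r_1 r_2(k-1)+1$ and $k > s \geq 0$.
   Context: For a positive integer $n$, $[n]=\{1,\ldots,n\}$. A hypergraph $\mathcal{H}=(V,E)$ consists of a finite vertex set $V$ and a set $E$ of non-empty subsets of $V$ (edges). A proper $m$-coloring of $\mathcal{H}$ is a map $c:V\to\{1,\ldots,m\}$ such that no edge is monochromatic, i.e. $|c(e)|\geq 2$ for every edge $e$. The chromatic number $\chi(\mathcal{H})$ is the least $m$ for which a proper $m$-coloring exists. The generalized Kneser hypergraph $KG^{r}(n,k,s)$ has as vertices all $k$-element subsets of $[n]$, and its edges are the sets $\{X_1,\ldots,X_r\}$ of $r$ distinct vertices such that $|X_i\cap X_j|\leq s$ for all $i\neq j$. *)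

From mathcomp Require Import all_boot.
Set Implicit Arguments. Unset Strict Implicit. Unset Printing Implicit Defensive.

(* [n] is represented by 'I_n (elements 0..n-1); vertices of KG^r(n,k,s)
   are the k-element sets X : {set 'I_n}. *)

Definition kg_edge (n k s r : nat) (E : {set {set 'I_n}}) : bool :=
  [&& #|E| == r,
      [forall X in E, #|X| == k] &
      [forall X in E, forall Y in E, (X != Y) ==> (#|X :&: Y| <= s)]].

(* c is a proper coloring of KG^r(n,k,s) with colors 'I_m (i.e. m colors):
   no edge is monochromatic.  (Colors on non-vertices are irrelevant.) *)
Definition kg_proper (n k s r m : nat) (c : {ffun {set 'I_n} -> 'I_m}) : bool :=
  [forall E : {set {set 'I_n}},
     kg_edge k s r E ==> [exists X in E, exists Y in E, c X != c Y]].

Definition kg_colorable (n k s r m : nat) : bool :=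
  [exists c : {ffun {set 'I_n} -> 'I_m}, kg_proper k s r c].

(* The search range 0..#|{set 'I_n}| suffices whenever r >= 2 (colour every
   set differently); if no m in range works (only possible for r <= 1),
   the value is #|{set 'I_n}|.+1. *)
Definition kg_chi (n k s r : nat) : nat :=
  find (kg_colorable n k s r) (iota 0 (#|{set 'I_n}|.+1)).

Definition ceil_div (a b : nat) : nat := (a + b - 1) %/ b.

From mathcomp Require Import all_boot zify.
Set Implicit Arguments. Unset Strict Implicit. Unset Printing Implicit Defensive.

(* Let c be an m-colouring of KG^{r1 r2}(n,k,s) with m below the claimed bound,
   and choose K so that the bound for r2 forbids m-colourings of KG^{r2}(K,k,s).
   Then inside every K-subset Y of [n] some edge is c-monochromatic; calling its
   colour d(Y) gives an m-colouring d of KG^{r1}(n,K,s), which the bound for r1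
   also forbids.  So some edge {Y_1, ..., Y_r1} is d-monochromatic, and the union
   of the chosen r2-edges inside the Y_i is a c-monochromatic edge of
   KG^{r1 r2}(n,k,s): k-sets taken from different Y_i meet in at most
   |Y_i :&: Y_j| <= s < k points, so they are distinct and pairwise s-intersecting. *)

Lemma card_bigcup_disjoint (T I : finType) (P : {pred I}) (F : I -> {set T}) :
    {in P &, forall i j, i != j -> [disjoint F i & F j]} ->
  #|\bigcup_(i in P) F i| = \sum_(i in P) #|F i|.
Proof.
move=> disjF; pose G i := if i \in P then F i else set0.
have -> : \bigcup_(i in P) F i = \bigcup_i G i by rewrite big_mkcond.
rewrite -sum1_card partition_disjoint_bigcup => [|i j neq_ij].
  rewrite [RHS]big_mkcond; apply: eq_bigr => i _.
  by rewrite sum1_card /G; case: ifP; rewrite ?cards0.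
rewrite /G; case: ifP => Pi; case: ifP => Pj; first exact: disjF.
all: by rewrite disjoints_subset ?sub0set ?setC0 ?subsetT.
Qed.

Section KneserHypergraph.

Variables (n k s r : nat).

Lemma kg_edgeP (E : {set {set 'I_n}}) :
  reflect [/\ #|E| = r, {in E, forall X : {set 'I_n}, #|X| = k}
            & {in E &, forall X Y : {set 'I_n}, X != Y -> #|X :&: Y| <= s}]
          (kg_edge k s r E).
Proof.
apply: (iffP and3P) => [[/eqP cardE /forall_inP sizeE /forall_inP interE]|].
  split=> // [X /sizeE/eqP // | X Y XE YE]; exact/implyP/(forall_inP (interE X XE)).
case=> -> sizeE interE.
split=> //; apply/forall_inP => X XE; first by rewrite sizeE.
by apply/forall_inP => Y YE; apply/implyP; exact: interE.
Qed.

Lemma kg_properPn m (c : {ffun {set 'I_n} -> 'I_m}) :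
  ~~ kg_proper k s r c ->
  exists2 E, kg_edge k s r E & {in E &, forall X Y, c X = c Y}.
Proof.
case/forallPn => E; rewrite negb_imply => /andP[edgeE].
rewrite negb_exists_in => /forall_inP monoE; exists E => // X Y XE YE.
by apply/eqP; move: (monoE X XE); rewrite negb_exists_in => /forall_inP/(_ Y YE)/negPn.
Qed.

End KneserHypergraph.

Lemma ltn_ceil_div a b m : 0 < b -> (m < ceil_div a b) = (m * b < a).
Proof. by move=> b_gt0; rewrite /ceil_div leq_divRL //; apply/idP/idP; lia. Qed.

Lemma kg_chi_uncolorable n k s r m :
  m < kg_chi n k s r -> ~~ kg_colorable n k s r m.
Proof.
move=> lt_m_chi; have := before_find 0 lt_m_chi.
rewrite nth_iota ?add0n => [-> // |].
by apply: leq_trans lt_m_chi _; rewrite -[X in _ <= X](size_iota 0) find_size.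
Qed.

Lemma kg_chi_ge n k s r c : c <= #|{set 'I_n}|.+1 ->
  (forall m, m < c -> ~~ kg_colorable n k s r m) -> c <= kg_chi n k s r.
Proof.
move=> c_le uncol; rewrite leqNgt; apply/negP => lt_chi.
have has_col : has (kg_colorable n k s r) (iota 0 #|{set 'I_n}|.+1).
  by rewrite has_find size_iota (leq_trans lt_chi).
have := nth_find 0 has_col; rewrite nth_iota ?add0n ?(leq_trans lt_chi) //.
by apply/negP; exact: uncol.
Qed.

Lemma kg_edge_imset n K k s r (f : 'I_K -> 'I_n) (E : {set {set 'I_K}}) :
  injective f -> kg_edge k s r E -> kg_edge k s r [set f @: X | X : {set 'I_K} in E].
Proof.
move=> inj_f /kg_edgeP[cardE sizeE interE]; apply/kg_edgeP; split.
- by rewrite card_imset //; exact: imset_inj.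
- by move=> _ /imsetP[X XE ->]; rewrite card_imset // sizeE.
- move=> _ _ /imsetP[X XE ->] /imsetP[Z ZE ->] neq_fXZ.
  rewrite -imsetI => [|x y _ _ /inj_f //]; rewrite card_imset //.
  by apply: interE => //; apply: contraNneq neq_fXZ => ->.
Qed.

Lemma kg_monochromatic_edge_in n K k s r m (c : {ffun {set 'I_n} -> 'I_m})
    (Y : {set 'I_n}) :
  #|Y| = K -> ~~ kg_colorable K k s r m ->
  exists E, [/\ kg_edge k s r E, E \subset powerset Y
              & {in E &, forall X Z, c X = c Z}].
Proof.
move=> cardY uncol.
pose f (i : 'I_K) : 'I_n := enum_val (cast_ord (esym cardY) i).
have inj_f : injective f by move=> i j /enum_val_inj/cast_ord_inj.
pose c' := [ffun X : {set 'I_K} => c (f @: X)].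
have : ~~ kg_proper k s r c'.
  by apply: contra uncol => proper_c'; apply/existsP; exists c'.
case/kg_properPn => E' edgeE' monoE'.
exists [set f @: X | X : {set 'I_K} in E']; split; first exact: kg_edge_imset.
- apply/subsetP => _ /imsetP[X _ ->]; rewrite powersetE.
  by apply/subsetP => _ /imsetP[i _ ->]; exact: enum_valP.
- move=> _ _ /imsetP[X XE ->] /imsetP[Z ZE ->].
  by have := monoE' X Z XE ZE; rewrite !ffunE.
Qed.

Lemma kg_edge_bigcup n K k s r1 r2 (F : {set {set 'I_n}})
    (e : {set 'I_n} -> {set {set 'I_n}}) :
  s < k -> kg_edge K s r1 F ->
  {in F, forall Y, kg_edge k s r2 (e Y) /\ e Y \subset powerset Y} ->
  kg_edge k s (r1 * r2) (\bigcup_(Y in F) e Y).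
Proof.
move=> lt_sk /kg_edgeP[cardF _ interF] edge_e.
have sub_e Y X : Y \in F -> X \in e Y -> X \subset Y.
  by move=> YF; move/subsetP: (edge_e Y YF).2 => /[apply]; rewrite powersetE.
have size_e Y X : Y \in F -> X \in e Y -> #|X| = k.
  by move=> YF; case/kg_edgeP: (edge_e Y YF).1 => _ sizeE _; exact: sizeE.
have cross Y Z X1 X2 : Y \in F -> Z \in F -> Y != Z -> X1 \in e Y -> X2 \in e Z ->
    #|X1 :&: X2| <= s.
  move=> YF ZF neq_YZ X1Y X2Z; apply: leq_trans (interF Y Z YF ZF neq_YZ).
  by apply/subset_leq_card/setISS; [exact: sub_e X1Y | exact: sub_e X2Z].
apply/kg_edgeP; split.
- rewrite card_bigcup_disjoint => [|Y Z YF ZF neq_YZ].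
    rewrite -cardF -sum_nat_const; apply: eq_bigr => Y YF.
    by case/kg_edgeP: (edge_e Y YF).1.
  apply/pred0P => X /=; apply/negP => /andP[XY XZ].
  have := cross _ _ _ _ YF ZF neq_YZ XY XZ.
  by rewrite setIid (size_e Y X) // leqNgt lt_sk.
- by move=> X /bigcupP[Y YF XY]; exact: size_e XY.
- move=> X1 X2 /bigcupP[Y YF X1Y] /bigcupP[Z ZF X2Z] neq_X12.
  have [eq_YZ | neq_YZ] := eqVneq Y Z; last exact: cross X1Y X2Z.
  subst Z; case/kg_edgeP: (edge_e Y YF).1 => _ _ interE; exact: interE.
Qed.

Lemma kg_uncolorable_mul n K k s r1 r2 m : 0 < r2 -> s < k ->
  ~~ kg_colorable n K s r1 m -> ~~ kg_colorable K k s r2 m ->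
  ~~ kg_colorable n k s (r1 * r2) m.
Proof.
move=> r2_gt0 lt_sk uncol1 uncol2; apply/existsP => -[c proper_c].
have : forall Y : {set 'I_n}, exists p : {set {set 'I_n}} * 'I_m, #|Y| = K ->
    [/\ kg_edge k s r2 p.1, p.1 \subset powerset Y & {in p.1, forall X, c X = p.2}].
  move=> Y; have [cardY | neq_cardY] := eqVneq #|Y| K; last first.
    (* sets of the wrong size get a dummy value; c set0 inhabits 'I_m *)
    by exists (set0, c set0) => cardY; rewrite cardY eqxx in neq_cardY.
  have [E [edgeE subE monoE]] := kg_monochromatic_edge_in c cardY uncol2.
  have [X0 X0E] : exists X0 : {set 'I_n}, X0 \in E.
    by apply/card_gt0P; case/kg_edgeP: edgeE => ->.
  by exists (E, c X0) => _; split=> // X XE; exact: monoE.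
case/fin_all_exists => mono_edge mono_edgeP.
have : ~~ kg_proper K s r1 [ffun Y => (mono_edge Y).2].
  by apply: contra uncol1 => proper_d; apply/existsP; eexists; exact: proper_d.
case/kg_properPn => F edgeF monoF.
have cardF Y : Y \in F -> #|Y| = K by case/kg_edgeP: edgeF => _ sizeF _; exact: sizeF.
have : kg_edge k s (r1 * r2) (\bigcup_(Y in F) (mono_edge Y).1).
  by apply: kg_edge_bigcup lt_sk edgeF _ => Y /cardF/mono_edgeP[].
move/(implyP (forallP proper_c _)).
case/exists_inP => X /bigcupP[Y YF XY] /exists_inP[Z /bigcupP[Y' Y'F ZY']].
case/mono_edgeP: (cardF Y YF) => _ _ /(_ X XY) ->.
case/mono_edgeP: (cardF Y' Y'F) => _ _ /(_ Z ZY') ->.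
by have := monoF Y Y' YF Y'F; rewrite !ffunE => ->; rewrite eqxx.
Qed.

(* With t = k - s - 1 and K = L + 1, the bound for B forbids m-colourings of
   KG^B(K,k,s), and the two conclusions make the bound for A forbid
   m-colourings of KG^A(n,K,s). *)
Lemma intermediate_size_bounds (A B m s t n : nat) : 0 < A -> 0 < B ->
  m * (A * B - 1) + A * B * t < n -> A * B * (s + t) < n ->
  let L := maxn ((B - 1) * m + B * t) (B * (s + t)) in
  A * L < n /\ m * (A - 1) + A * (L - s) < n.
Proof.
move=> A_gt0 B_gt0 m_small st_small L.
have split_m : m * (A * B - 1) = A * ((B - 1) * m) + (A - 1) * m.
  case: A A_gt0 {m_small st_small L} => // a _; case: B B_gt0 => // b _.
  by rewrite !subn1 /=; nia.
rewrite split_m in m_small; rewrite [m * _]mulnC {}/L.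
have [le_Bst | lt_Bst] := leqP (B * (s + t)) ((B - 1) * m + B * t).
- have : A * (((B - 1) * m + B * t) - s) <= A * ((B - 1) * m + B * t).
    by rewrite leq_mul2l leq_subr orbT.
  rewrite mulnDr mulnA; lia.
- have splitL : B * (s + t) - s = (B - 1) * s + B * t.
    have : s <= B * s by rewrite leq_pmull.
    rewrite mulnBl mul1n mulnDr; lia.
  have expand_ABst : A * (B * (s + t)) = A * B * s + A * B * t by rewrite mulnA mulnDr.
  have expand_Ls : A * ((B - 1) * s + B * t) = A * ((B - 1) * s) + A * B * t.
    by rewrite mulnDr [A * (B * t)]mulnA.
  have split_ABs : A * B * s = A * ((B - 1) * s) + A * s.
    by rewrite -mulnDr -mulSnr subn1 prednK // mulnA.
  rewrite splitL expand_ABst expand_Ls; rewrite mulnDr in st_small.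
  case: (leqP s m) => [le_sm | lt_ms].
    have : A * ((B - 1) * s) <= A * ((B - 1) * m) by rewrite !leq_mul2l le_sm !orbT.
    lia.
  have : (A - 1) * m <= A * m by rewrite leq_mul2r leq_subr orbT.
  have : A * m < A * s by rewrite ltn_pmul2l.
  lia.
Qed.

Definition kg_chi_bound (r : nat) : Prop :=
  forall n k s : nat, r * (k - 1) + 1 <= n -> s < k ->
    ceil_div (n - r * (k - s - 1)) (r - 1) <= kg_chi n k s r.

Lemma kg_chi_ge_ceil n k s r : 1 < r ->
  (forall m, m * (r - 1) + r * (k - s - 1) < n -> ~~ kg_colorable n k s r m) ->
  ceil_div (n - r * (k - s - 1)) (r - 1) <= kg_chi n k s r.
Proof.
move=> r_gt1 uncol; have r1_gt0 : 0 < r - 1 by rewrite subn_gt0.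
apply: kg_chi_ge => [|m]; last by rewrite ltn_ceil_div // ltn_subRL addnC; exact: uncol.
have lt_n_sets : n < #|{set 'I_n}|.
  by rewrite -cardsT -powersetT card_powerset cardsT card_ord ltn_expl.
apply/leqW/(leq_trans _ (ltnW lt_n_sets)); rewrite leqNgt ltn_ceil_div // -leqNgt.
exact: leq_trans (leq_subr _ _) (leq_pmulr _ r1_gt0).
Qed.

Lemma kg_uncolorable_of_chi_bound n k s r m : 1 < r -> kg_chi_bound r ->
  r * (k - 1) < n -> s < k -> m * (r - 1) + r * (k - s - 1) < n ->
  ~~ kg_colorable n k s r m.
Proof.
move=> r_gt1 bound_r n_large lt_sk m_small; apply: kg_chi_uncolorable.
apply: leq_trans (bound_r n k s _ lt_sk); last by rewrite addn1.
by rewrite ltn_ceil_div ?subn_gt0 // ltn_subRL addnC.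
Qed.

Lemma kg_chi_bound_mul r1 r2 : 1 < r1 -> 1 < r2 ->
  kg_chi_bound r1 -> kg_chi_bound r2 -> kg_chi_bound (r1 * r2).
Proof.
move=> r1_gt1 r2_gt1 bound1 bound2 n k s n_large lt_sk.
apply: kg_chi_ge_ceil => [|m m_small]; first exact: leq_trans _ (leq_mul r1_gt1 r2_gt1).
set t := k - s - 1 in m_small; have k1 : k - 1 = s + t by rewrite /t; lia.
rewrite k1 addn1 in n_large.
have [] := @intermediate_size_bounds r1 r2 m s t n (ltnW r1_gt1) (ltnW r2_gt1).
- exact: m_small.
- exact: n_large.
set L := maxn _ _ => L_small Ls_small.
apply: (@kg_uncolorable_mul n L.+1 k s r1 r2 m) => //; first exact: ltnW.
- apply: kg_uncolorable_of_chi_bound => //; first by rewrite subn1.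
    rewrite ltnS (leq_trans _ (leq_maxr _ _)) // (leq_trans (leq_addr t s)) //.
    by rewrite leq_pmull // ltnW.
  by rewrite -subnDA addn1 subSS.
- apply: kg_uncolorable_of_chi_bound => //; first by rewrite k1 ltnS leq_maxr.
  by rewrite ltnS [m * _]mulnC; apply: leq_maxl.
Qed.

Theorem lemma3 (r1 r2 : nat) (hr1 : 2 <= r1) (hr2 : 2 <= r2)
  (H1 : forall n k s : nat, r1 * (k - 1) + 1 <= n -> s < k ->
          ceil_div (n - r1 * (k - s - 1)) (r1 - 1) <= kg_chi n k s r1)
  (H2 : forall n k s : nat, r2 * (k - 1) + 1 <= n -> s < k ->
          ceil_div (n - r2 * (k - s - 1)) (r2 - 1) <= kg_chi n k s r2) :
  forall n k s : nat, (r1 * r2) * (k - 1) + 1 <= n -> s < k ->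
    ceil_div (n - (r1 * r2) * (k - s - 1)) (r1 * r2 - 1) <= kg_chi n k s (r1 * r2).
Proof. exact: kg_chi_bound_mul. Qed.
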